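(* Let $G$, $m$ and $\mathrm{Stone}(G,m)$ be as below, let $i$ be a non-source vertex of $G$ with predecessors $i'$ and $i''$, let $1\le j\le m$, and let $F=\{\overline r_{j_1},\dots,\overline r_{j_\ell}\}$ be a set of negated $r$-literals with $\overline r_j\notin F$. Then there is a regular tree-like resolution derivation of the clause $F\lor\overline p_{i,j}\lor r_j$ from the clauses of $\mathrm{Stone}(G,m)$ together with the clauses $\overline p_{i',k}\lor r_k$ and $\overline p_{i'',k}\lor r_k$ for $1\le k\le m$, which has size $O(m^2)$ and whose resolution variables are only among the variables $r_k$ with $k\notin\{j,j_1,\dots,j_\ell\}$ and the variables $p_{i',k}$ and $p_{i'',k}$ for $1\le k\le m$.
   Context: Let $G=(V,E)$ be a directed acyclic graph with vertex set $V=\{1,\dots,N\}$, single sink $1$, each non-source vertex of in-degree exactly $2$, edges $(i',i)$ satisfying $i'>i$, sources exactly $n+1,\dots,N$; let $m\ge N$. $\mathrm{Stone}(G,m)$ consists of: $\bigvee_{j=1}^m p_{i,j}$ for each vertex $i$; $\overline p_{i,j}\lor r_j$ for each source $i$ and each $j$; $\overline p_{1,j}\lor\overline r_j$ for each $j$; and $\overline p_{i',j'}\lor\overline r_{j'}\lor\overline p_{i'',j''}\lor\overline r_{j''}\lor\overline p_{i,j}\lor r_j$ whenever $i',i''$ are the two predecessors of $i$ and $j\notin\{j',j''\}$. A resolution inference derives $(A\setminus\{x\})\cup(B\setminus\{\overline x\})$ from $A\ni x$ and $B\ni\overline x$. A derivation is tree-like if its underlying dag is a tree, and a derivation of a clause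 $C$ is regular if no variable is used as a resolution variable more than once along any path and no variable occurring in $C$ is used as a resolution variable. Size = number of clauses; the $O(\cdot)$ constant is absolute. *)

From HB Require Import structures.
From mathcomp Require Import all_boot.
Set Implicit Arguments. Unset Strict Implicit. Unset Printing Implicit Defensive.

(** Propositional variables of Stone(G,m): [P i j] is p_{i,j}, [R j] is r_j. *)
Inductive var := P of nat & nat | R of nat.

Definition var_eqb (x y : var) : bool :=
  match x, y with
  | P a b, P c d => (a == c) && (b == d)
  | R a, R b => a == b
  | _, _ => false
  end.

Lemma var_eqP : Equality.axiom var_eqb.
Proof.
case=> [a b|a] [c d|c] /=; try by constructor.
- by apply: (iffP andP) => [[/eqP -> /eqP ->]|[-> ->]].
- by apply: (iffP eqP) => [->|[->]].
Qed.

HB.instance Definition _ := hasDecEq.Build var var_eqP.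

Definition lit := (var * bool)%type.
Definition pos (v : var) : lit := (v, true).
Definition neg (v : var) : lit := (v, false).

(** Clauses are sets of literals, represented by sequences compared with [=i]. *)
Definition clause := seq lit.

(** The graph G: vertices 1..N, edge relation E (E a b means edge (a,b)). *)
Definition indeg (N : nat) (E : rel nat) (v : nat) : nat :=
  count (fun u => E u v) (iota 1 N).

Definition stone_dag (N n : nat) (E : rel nat) : Prop :=
  [/\
      (forall a b, E a b -> [/\ 1 <= b, b < a & a <= N]),
      (forall v, 1 <= v <= N -> (indeg N E v == 0) = (n < v)),
      (forall v, 1 <= v <= N -> v <= n -> indeg N E v = 2)
    &
      (forall v, 1 <= v <= N -> ((forall w, ~~ E v w) <-> v = 1))].

Definition stone_axiom (N n : nat) (E : rel nat) (m : nat) (C : clause) : Prop :=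
  [\/ exists i, 1 <= i <= N /\ C = [seq pos (P i k) | k <- iota 1 m],
      exists i k, [/\ n < i <= N, 1 <= k <= m & C = [:: neg (P i k); pos (R k)]],
      exists k, 1 <= k <= m /\ C = [:: neg (P 1 k); neg (R k)]
    | exists i i1 i2 k k1 k2,
        [/\ [/\ 1 <= i <= N, E i1 i, E i2 i & i1 != i2],
            [/\ 1 <= k <= m, 1 <= k1 <= m & 1 <= k2 <= m],
            k != k1, k != k2 &
            C = [:: neg (P i1 k1); neg (R k1); neg (P i2 k2); neg (R k2);
                    neg (P i k); pos (R k)]]].

Inductive deriv := Leaf of clause | Res of var & deriv & deriv.

Definition resolvent (v : var) (A B : clause) : clause :=
  [seq l <- A | l != pos v] ++ [seq l <- B | l != neg v].

Fixpoint concl (d : deriv) : clause :=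
  match d with
  | Leaf C => C
  | Res v d1 d2 => resolvent v (concl d1) (concl d2)
  end.

Fixpoint valid (H : clause -> Prop) (d : deriv) : Prop :=
  match d with
  | Leaf C => H C
  | Res v d1 d2 =>
      [/\ pos v \in concl d1, neg v \in concl d2, valid H d1 & valid H d2]
  end.

Fixpoint dsize (d : deriv) : nat :=
  match d with
  | Leaf _ => 1
  | Res _ d1 d2 => (dsize d1 + dsize d2).+1
  end.

Fixpoint resvars (d : deriv) : seq var :=
  match d with
  | Leaf _ => [::]
  | Res v d1 d2 => v :: (resvars d1 ++ resvars d2)
  end.

Fixpoint path_regular (d : deriv) : bool :=
  match d with
  | Leaf _ => true
  | Res v d1 d2 =>
      [&& v \notin resvars d1 ++ resvars d2, path_regular d1 & path_regular d2]
  end.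

Definition regular_of (C : clause) (d : deriv) : Prop :=
  path_regular d /\
  forall v, v \in resvars d -> forall b : bool, (v, b) \notin C.

Definition hyps (N n : nat) (E : rel nat) (m i1 i2 : nat) (C : clause) : Prop :=
  exists A, C =i A /\
    (stone_axiom N n E m A \/
     exists k, 1 <= k <= m /\
       (A = [:: neg (P i1 k); pos (R k)] \/ A = [:: neg (P i2 k); pos (R k)])).

Definition target (i j : nat) (js : seq nat) : clause :=
  [seq neg (R x) | x <- js] ++ [:: neg (P i j); pos (R j)].

(* For each colour k1 of the first predecessor we derive ~p_{i1,k1} v F v ~p_{i,j} v r_j
   and resolve these m clauses against the axiom \/_k p_{i1,k}.  For k1 = j this is the
   axiom ~p_{i1,j} v r_j.  Otherwise we resolve \/_k p_{i2,k} against, for each colour k2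
   of the second predecessor, the axiom ~p_{i2,j} v r_j when k2 = j and otherwise the
   pebbling axiom for the colours (k1, k2, j), in which ~r_k2 is resolved away with
   ~p_{i2,k2} v r_k2 unless k2 is in F or equals k1; this yields
   ~p_{i1,k1} v ~r_k1 v F v ~p_{i,j} v r_j, and ~r_k1 is then resolved away with
   ~p_{i1,k1} v r_k1 unless k1 is in F.  Each inner tree has O(1) clauses, so the whole tree
   has O(m^2).  It is regular because the r-variables resolved near the leaves differ from
   k1, j and F, while the p-variables of i1 and i2 are resolved only in the two layers of
   cover resolutions. *)

From HB Require Import structures.
From mathcomp Require Import all_boot zify.

Lemma mem_concl_Res u d1 d2 l :
  (l \in concl (Res u d1 d2)) =
    (l \in concl d1) && (l != pos u) || (l \in concl d2) && (l != neg u).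
Proof. by rewrite /= /resolvent mem_cat !mem_filter ![_ && (_ \in _)]andbC. Qed.

Section ResolutionChain.

Variables (v : nat -> var) (f : nat -> deriv).
Hypothesis v_inj : injective v.

Definition chain (ks : seq nat) (d0 : deriv) : deriv :=
  foldl (fun d k => Res (v k) d (f k)) d0 ks.

Lemma chain_cons k ks d0 : chain (k :: ks) d0 = chain ks (Res (v k) d0 (f k)).
Proof. by []. Qed.

Lemma valid_chain H ks d0 :
  uniq ks -> valid H d0 -> {in ks, forall k, pos (v k) \in concl d0} ->
  {in ks, forall k, valid H (f k) /\ neg (v k) \in concl (f k)} ->
  valid H (chain ks d0).
Proof.
elim: ks d0 => [|k ks IH] d0 //= /andP[kNks uks] d0H d0v fH.
have [fkH fkv] := fH k (mem_head _ _).
apply: IH => // [|k' k'ks|k' k'ks]; last by apply: fH; rewrite inE k'ks orbT.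
  by split=> //; apply: d0v; rewrite mem_head.
have k'Nk : k' != k by apply: contraNneq kNks => <-.
by rewrite mem_concl_Res d0v ?inE ?k'ks ?orbT // xpair_eqE andbT (inj_eq v_inj) k'Nk.
Qed.

Lemma mem_concl_chain U ks d0 l :
  (forall k b, (v k, b) \notin U) ->
  {in ks, forall k, {subset concl (f k) <= neg (v k) :: U}} ->
  {subset concl d0 <= [seq pos (v k) | k <- ks] ++ U} ->
  (l \in concl (chain ks d0)) =
    (l \in concl d0) && (l \notin [seq pos (v k) | k <- ks])
    || has (fun k => (l \in concl (f k)) && (l != neg (v k))) ks.
Proof.
move=> Uv; elim: ks d0 => [|k ks IH] d0 fU d0U; first by rewrite /= andbT orbF.
have fkU l' : l' \in concl (f k) -> l' != neg (v k) -> l' \in U.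
  by move=> /(fU k (mem_head _ _)); rewrite inE => /orP[/eqP->|//]; rewrite eqxx.
rewrite chain_cons IH => [|k' k'ks|l']; first last.
- rewrite mem_concl_Res => /orP[/andP[/d0U]|/andP[/fkU fkl /fkl]].
    by rewrite inE mem_cat => /orP[/eqP->|]; rewrite ?eqxx // -mem_cat.
  by rewrite mem_cat => ->; rewrite orbT.
- by apply: fU; rewrite inE k'ks orbT.
rewrite mem_concl_Res map_cons inE negb_or [has _ (_ :: _)]/= andbA.
case fkl: ((l \in concl (f k)) && _); last by rewrite orbF.
have lU : l \in U by case/andP: fkl => /fkU.
have lNks : l \notin [seq pos (v k) | k <- ks].
  by apply/mapP => -[k' _ lE]; move: lU; rewrite lE; apply/negP/Uv.
by rewrite lNks !(orbT, orTb).
Qed.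

Lemma mem_resvars_chain ks d0 u :
  (u \in resvars (chain ks d0)) =
    (u \in resvars d0) || has (fun k => (u == v k) || (u \in resvars (f k))) ks.
Proof.
elim: ks d0 => [|k ks IH] d0; first by rewrite orbF.
by rewrite chain_cons IH /= inE mem_cat orbCA !orbA.
Qed.

Lemma path_regular_chain ks d0 :
  uniq ks -> path_regular d0 -> {in ks, forall k, path_regular (f k)} ->
  {in ks, forall k, v k \notin resvars d0} ->
  {in ks &, forall k k', v k \notin resvars (f k')} ->
  path_regular (chain ks d0).
Proof.
elim: ks d0 => [|k ks IH] d0 //= /andP[kNks uks] d0reg freg d0v fv.
have ksk k' : k' \in ks -> k' \in k :: ks by rewrite inE => ->; rewrite orbT.
apply: IH => // [|k' /ksk/freg //|k' k'ks|k' k'' /ksk k'ks /ksk k''ks]; last exact: fv.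
- by rewrite /= mem_cat negb_or d0v ?fv ?freg ?d0reg ?mem_head.
- have k'Nk : k' != k by apply: contraNneq kNks => <-.
  by rewrite /= inE mem_cat (inj_eq v_inj) (negbTE k'Nk) /= negb_or d0v ?fv ?mem_head ?ksk.
Qed.

Lemma dsize_chain b ks d0 :
  {in ks, forall k, dsize (f k) <= b} -> dsize (chain ks d0) <= dsize d0 + size ks * b.+1.
Proof.
elim: ks d0 => [|k ks IH] d0 fb /=; first by rewrite addn0.
apply: leq_trans (IH _ _) _ => [k' k'ks|].
  by apply: fb; rewrite inE k'ks orbT.
by have := fb k (mem_head _ _); rewrite /= mulSn; lia.
Qed.

Definition resolve_cover ks : deriv := chain ks (Leaf [seq pos (v k) | k <- ks]).

Lemma valid_resolve_cover H ks :
  uniq ks -> H [seq pos (v k) | k <- ks] ->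
  {in ks, forall k, valid H (f k) /\ neg (v k) \in concl (f k)} ->
  valid H (resolve_cover ks).
Proof. by move=> uks Hks fH; apply: valid_chain => // k kks; apply: map_f. Qed.

Lemma mem_concl_resolve_cover U ks l :
  (forall k b, (v k, b) \notin U) ->
  {in ks, forall k, {subset concl (f k) <= neg (v k) :: U}} ->
  (l \in concl (resolve_cover ks)) =
    has (fun k => (l \in concl (f k)) && (l != neg (v k))) ks.
Proof.
move=> Uv fU; rewrite (mem_concl_chain _ _ _ _ Uv fU) ?andbN // => l'.
by rewrite mem_cat => ->.
Qed.

Lemma mem_resvars_resolve_cover ks u :
  (u \in resvars (resolve_cover ks)) =
    has (fun k => (u == v k) || (u \in resvars (f k))) ks.
Proof. exact: mem_resvars_chain. Qed.

Lemma path_regular_resolve_cover ks :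
  uniq ks -> {in ks, forall k, path_regular (f k)} ->
  {in ks &, forall k k', v k \notin resvars (f k')} ->
  path_regular (resolve_cover ks).
Proof. by move=> *; apply: path_regular_chain. Qed.

Lemma dsize_resolve_cover b ks :
  {in ks, forall k, dsize (f k) <= b} -> dsize (resolve_cover ks) <= (size ks * b.+1).+1.
Proof. exact: dsize_chain. Qed.

End ResolutionChain.

Definition elim_negr (a k : nat) (d : deriv) : deriv :=
  Res (R k) (Leaf [:: neg (P a k); pos (R k)]) d.

Lemma concl_elim_negr a k d :
  concl (elim_negr a k d) = neg (P a k) :: [seq l <- concl d | l != neg (R k)].
Proof. by rewrite /= /resolvent /= eqxx. Qed.

Lemma valid_elim_negr H a k d :
  H [:: neg (P a k); pos (R k)] -> valid H d -> neg (R k) \in concl d ->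
  valid H (elim_negr a k d).
Proof. by move=> *; split; rewrite // !inE eqxx orbT. Qed.

Lemma eq_var_P a k a' k' : (P a k == P a' k') = (a == a') && (k == k').
Proof. by []. Qed.

Lemma eq_var_R x x' : (R x == R x') = (x == x').
Proof. by []. Qed.

Lemma eq_var_PR a k x : (P a k == R x) = false.
Proof. by []. Qed.

Lemma mem_target_P i j js a k b :
  ((P a k, b) \in target i j js) = [&& a == i, k == j & ~~ b].
Proof.
rewrite mem_cat !inE !xpair_eqE !eq_var_P eq_var_PR.
by case: b; rewrite ?andbF ?andbT ?orbF; case: mapP => // -[].
Qed.

Lemma mem_target_R i j js x b :
  ((R x, b) \in target i j js) = if b then x == j else x \in js.
Proof.
rewrite mem_cat !inE !xpair_eqE eq_var_R (eq_sym (R x)) eq_var_PR.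
case: b; rewrite /= ?andbF ?andbT ?orbF.
- by case: mapP => // -[].
- by rewrite (mem_map (f := fun x => neg (R x))) // => ? ? [->].
Qed.

Lemma mem_iota1 m k : (k \in iota 1 m) = (1 <= k <= m).
Proof. by rewrite mem_iota add1n ltnS. Qed.

Lemma P_inj a : injective (P a).
Proof. by move=> k k' []. Qed.

(* Reduces membership of explicit literals in explicit clauses to tests on indices. *)
Ltac lit_mem := rewrite /= /pos /neg ?inE ?xpair_eqE ?eq_var_P ?eq_var_R ?eq_var_PR
  ?mem_target_P ?mem_target_R /= ?eqxx ?andbF ?andbT ?orbT ?orbF /= ?andbT ?orbT.

Section StoneDerivation.

Variables (N n : nat) (E : rel nat) (m i i1 i2 j : nat) (js : seq nat).

Local Notation H := (hyps N n E m i1 i2).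
Local Notation T := (target i j js).

Hypotheses (E1 : E i1 i) (E2 : E i2 i) (n12 : i1 != i2) (i1Ni : i1 != i) (i2Ni : i2 != i).
Hypotheses (hi : 1 <= i <= N) (hi1 : 1 <= i1 <= N) (hi2 : 1 <= i2 <= N).
Hypotheses (hj : 1 <= j <= m) (jNjs : j \notin js) (hjs : {in js, forall x, 1 <= x <= m}).
(* A colour [w <> j] supplies the literals missing from the bare axiom [~p_{a,j} v r_j]
   used for colour [j]. *)
Hypothesis other_colour : exists2 w, 1 <= w <= m & w != j.

Lemma hyps_pred_axiom a k : a \in [:: i1; i2] -> 1 <= k <= m ->
  H [:: neg (P a k); pos (R k)].
Proof.
move=> ha hk; exists [:: neg (P a k); pos (R k)]; split=> //; right; exists k.
by split=> //; move: ha; rewrite !inE => /orP[]/eqP->; [left|right].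
Qed.

Lemma hyps_cover a : 1 <= a <= N -> H [seq pos (P a k) | k <- iota 1 m].
Proof.
by move=> ha; exists [seq pos (P a k) | k <- iota 1 m]; split=> //; left; apply: Or41; exists a.
Qed.

Definition pebble_clause k1 k2 : clause :=
  [:: neg (P i1 k1); neg (R k1); neg (P i2 k2); neg (R k2); neg (P i j); pos (R j)].

Lemma hyps_pebble k1 k2 : 1 <= k1 <= m -> 1 <= k2 <= m -> k1 != j -> k2 != j ->
  H (pebble_clause k1 k2).
Proof.
move=> hk1 hk2 k1Nj k2Nj; exists (pebble_clause k1 k2); split=> //; left; apply: Or44.
by exists i, i1, i2, j, k1, k2; split; rewrite // eq_sym.
Qed.

(* [~r_k2] is kept when it belongs to the conclusion [~p_{i1,k1} v ~r_k1 v T] of [pred2_deriv k1]. *)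
Definition pebble_deriv k1 k2 : deriv :=
  if k2 == j then Leaf [:: neg (P i2 j); pos (R j)]
  else if (k2 == k1) || (k2 \in js) then Leaf (pebble_clause k1 k2)
  else elim_negr i2 k2 (Leaf (pebble_clause k1 k2)).

Lemma pebble_deriv_sub k1 k2 :
  {subset concl (pebble_deriv k1 k2) <= neg (P i2 k2) :: neg (P i1 k1) :: neg (R k1) :: T}.
Proof.
rewrite /pebble_deriv; case: eqP => [->|_]; last case: ifP => [k2in|_].
- by apply/allP; lit_mem.
- by apply/allP; lit_mem.
- by rewrite concl_elim_negr; apply/allP; lit_mem; case: ifP => _; lit_mem.
Qed.

Lemma pebble_deriv_sup k1 k2 : k2 != j ->
  {subset [:: neg (P i2 k2); neg (P i1 k1); neg (R k1); neg (P i j); pos (R j)]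
     <= concl (pebble_deriv k1 k2)}.
Proof.
rewrite /pebble_deriv => /negbTE->.
case: ifP => [_|/norP[k2k1 _]]; apply/(allP (a := fun l => l \in _)); first by lit_mem.
by rewrite concl_elim_negr; lit_mem; rewrite eq_sym k2k1; lit_mem.
Qed.

Lemma pebble_deriv_negr k1 k2 : k2 \in js -> neg (R k2) \in concl (pebble_deriv k1 k2).
Proof.
move=> k2js; have k2Nj : k2 != j by apply: contraNneq jNjs => <-.
by rewrite /pebble_deriv (negbTE k2Nj) k2js orbT /= !inE eqxx !orbT.
Qed.

Lemma pebble_deriv_pred2 k1 k2 : neg (P i2 k2) \in concl (pebble_deriv k1 k2).
Proof.
rewrite /pebble_deriv; case: eqP => [->|_]; first exact: mem_head.
by case: ifP => _; rewrite ?concl_elim_negr !inE eqxx ?orbT.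
Qed.

Lemma valid_pebble_deriv k1 k2 : 1 <= k1 <= m -> 1 <= k2 <= m -> k1 != j ->
  valid H (pebble_deriv k1 k2).
Proof.
move=> hk1 hk2 k1Nj; rewrite /pebble_deriv; case: eqP => [_|/eqP k2Nj].
  by apply: hyps_pred_axiom; rewrite ?inE ?eqxx ?orbT.
case: ifP => _; first exact: hyps_pebble.
apply: valid_elim_negr; first by apply: hyps_pred_axiom; rewrite ?inE ?eqxx ?orbT.
  exact: hyps_pebble.
by rewrite /= !inE eqxx !orbT.
Qed.

Lemma resvars_pebble_deriv k1 k2 :
  resvars (pebble_deriv k1 k2) = if k2 \in k1 :: j :: js then [::] else [:: R k2].
Proof.
rewrite /pebble_deriv !inE orbCA; case: eqP => //= _.
by case: ifP.
Qed.

Definition pred2_deriv k1 : deriv :=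
  resolve_cover (P i2) (pebble_deriv k1) (iota 1 m).

Lemma mem_concl_pred2_deriv k1 l :
  (l \in concl (pred2_deriv k1)) = (l \in neg (P i1 k1) :: neg (R k1) :: T).
Proof.
rewrite (mem_concl_resolve_cover _ _ (neg (P i1 k1) :: neg (R k1) :: T)) => [|k b|k2 _];
  last exact: pebble_deriv_sub;
  last by lit_mem; rewrite eq_sym (negbTE n12) (negbTE i2Ni).
apply/hasP/idP => [[k2 _ /andP[lZ lNp]]|lU].
  by move/pebble_deriv_sub: lZ; rewrite inE (negbTE lNp).
have [w hw wNj] := other_colour.
have [/mapP[x xjs ->]|lNF] := boolP (l \in [seq neg (R x) | x <- js]).
  by exists x; rewrite ?mem_iota1 ?hjs ?pebble_deriv_negr.
exists w; rewrite ?mem_iota1 //.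
move: lU; rewrite /target 2!inE mem_cat (negbTE lNF) !inE /=.
case/or4P => /eqP->; rewrite (pebble_deriv_sup k1 w wNj) ?inE ?eqxx ?orbT //=;
  by lit_mem; rewrite ?(negbTE n12) // eq_sym (negbTE i2Ni).
Qed.

Lemma valid_pred2_deriv k1 : 1 <= k1 <= m -> k1 != j -> valid H (pred2_deriv k1).
Proof.
move=> hk1 k1Nj; apply: valid_resolve_cover; [exact: P_inj|exact: iota_uniq|exact: hyps_cover|].
move=> k2; rewrite mem_iota1 => hk2.
by split; [apply: valid_pebble_deriv | apply: pebble_deriv_pred2].
Qed.

Definition resolvable (vs ex : seq nat) (u : var) : bool :=
  match u with
  | P a k => (a \in vs) && (1 <= k <= m)
  | R k => k \notin ex
  end.

Lemma resolvable_weaken vs vs' ex ex' u :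
  {subset vs <= vs'} -> {subset ex' <= ex} -> resolvable vs ex u -> resolvable vs' ex' u.
Proof. by case: u => [a k|k] /= sa se; [case/andP => /sa -> -> | apply: contra; apply: se]. Qed.

Lemma resvars_pred2_deriv k1 :
  {in resvars (pred2_deriv k1), forall u, resolvable [:: i2] (k1 :: j :: js) u}.
Proof.
move=> u; rewrite mem_resvars_resolve_cover => /hasP[k2].
rewrite mem_iota1 => hk2 /orP[/eqP->|]; first by rewrite /= inE eqxx.
by rewrite resvars_pebble_deriv; case: ifP => // k2N; rewrite inE => /eqP->; rewrite /= k2N.
Qed.

Lemma path_regular_pred2_deriv k1 : path_regular (pred2_deriv k1).
Proof.
apply: path_regular_resolve_cover; [exact: P_inj|exact: iota_uniq| |].
  by move=> k2 _; rewrite /pebble_deriv; case: eqP => //; case: ifP.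
by move=> k k2 _ _; rewrite resvars_pebble_deriv; case: ifP.
Qed.

Lemma dsize_pred2_deriv k1 : dsize (pred2_deriv k1) <= (m * 4).+1.
Proof.
rewrite -[m in m * 4](size_iota 1); apply: dsize_resolve_cover => k2 _.
by rewrite /pebble_deriv; case: eqP => //; case: ifP.
Qed.

Definition pred1_deriv k1 : deriv :=
  if k1 == j then Leaf [:: neg (P i1 j); pos (R j)]
  else if k1 \in js then pred2_deriv k1
  else elim_negr i1 k1 (pred2_deriv k1).

Lemma mem_concl_pred1_deriv k1 l : k1 != j ->
  (l \in concl (pred1_deriv k1)) = (l \in neg (P i1 k1) :: T).
Proof.
have k1T : (neg (R k1) \in T) = (k1 \in js) by rewrite /neg mem_target_R.
rewrite /pred1_deriv => /negbTE->; case: ifP => k1js.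
  rewrite mem_concl_pred2_deriv !inE.
  by case: (l =P neg (R k1)) => [->|_]; rewrite ?k1T ?k1js ?orbT.
rewrite concl_elim_negr inE mem_filter mem_concl_pred2_deriv !inE.
by case: (l =P neg (R k1)) => [->|_]; rewrite /= ?andbT ?k1T ?k1js ?orbA ?orbb.
Qed.

Lemma pred1_deriv_sub k1 : {subset concl (pred1_deriv k1) <= neg (P i1 k1) :: T}.
Proof.
have [->|k1Nj] := eqVneq k1 j; last by move=> l; rewrite mem_concl_pred1_deriv.
by rewrite /pred1_deriv eqxx; apply/allP; lit_mem.
Qed.

Lemma pred1_deriv_pred1 k1 : neg (P i1 k1) \in concl (pred1_deriv k1).
Proof.
have [->|k1Nj] := eqVneq k1 j; last by rewrite mem_concl_pred1_deriv ?mem_head.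
by rewrite /pred1_deriv eqxx mem_head.
Qed.

Lemma valid_pred1_deriv k1 : 1 <= k1 <= m -> valid H (pred1_deriv k1).
Proof.
move=> hk1; rewrite /pred1_deriv; case: eqP => [_|/eqP k1Nj].
  by apply: hyps_pred_axiom; rewrite ?inE ?eqxx.
case: ifP => _; first exact: valid_pred2_deriv.
apply: valid_elim_negr; first by apply: hyps_pred_axiom; rewrite ?inE ?eqxx.
  exact: valid_pred2_deriv.
by rewrite mem_concl_pred2_deriv !inE eqxx orbT.
Qed.

Lemma resvars_pred1_deriv k1 :
  {in resvars (pred1_deriv k1), forall u, resolvable [:: i2] (j :: js) u}.
Proof.
have weaken u : resolvable [:: i2] (k1 :: j :: js) u -> resolvable [:: i2] (j :: js) u.
  by apply: resolvable_weaken => // x xjjs; rewrite inE xjjs orbT.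
move=> u; rewrite /pred1_deriv; case: eqP => // /eqP k1Nj.
case: ifP => k1js; first by move/resvars_pred2_deriv/weaken.
rewrite inE => /orP[/eqP->|/resvars_pred2_deriv/weaken //].
by rewrite /= inE negb_or k1Nj k1js.
Qed.

Lemma path_regular_pred1_deriv k1 : path_regular (pred1_deriv k1).
Proof.
rewrite /pred1_deriv; case: eqP => // _.
case: ifP => _; rewrite /= path_regular_pred2_deriv ?andbT //.
by apply/negP => /resvars_pred2_deriv; rewrite /= inE eqxx.
Qed.

Lemma dsize_pred1_deriv k1 : dsize (pred1_deriv k1) <= (m * 4).+3.
Proof.
have := dsize_pred2_deriv k1.
by rewrite /pred1_deriv; case: eqP => // _; case: ifP => _ /=; lia.
Qed.

Definition stone_deriv : deriv := resolve_cover (P i1) pred1_deriv (iota 1 m).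

Lemma valid_stone_deriv : valid H stone_deriv.
Proof.
apply: valid_resolve_cover; [exact: P_inj|exact: iota_uniq|exact: hyps_cover|].
move=> k1; rewrite mem_iota1 => hk1.
by split; [apply: valid_pred1_deriv | apply: pred1_deriv_pred1].
Qed.

Lemma concl_stone_deriv : concl stone_deriv =i T.
Proof.
move=> l; rewrite (mem_concl_resolve_cover _ _ T) => [|k b|k1 _]; last first.
- exact: pred1_deriv_sub.
- by rewrite /= mem_target_P (negbTE i1Ni).
apply/hasP/idP => [[k1 _ /andP[/pred1_deriv_sub lX lNp]]|lT].
  by move: lX; rewrite inE (negbTE lNp).
have [w hw wNj] := other_colour.
exists w; first by rewrite mem_iota1.
rewrite mem_concl_pred1_deriv // inE lT orbT /=.
by apply: contraTneq lT => ->; rewrite /neg mem_target_P (negbTE i1Ni).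
Qed.

Lemma resvars_stone_deriv :
  {in resvars stone_deriv, forall u, resolvable [:: i1; i2] (j :: js) u}.
Proof.
move=> u; rewrite mem_resvars_resolve_cover => /hasP[k1].
rewrite mem_iota1 => hk1 /orP[/eqP->|]; first by rewrite /= inE eqxx hk1.
by move/resvars_pred1_deriv; apply: resolvable_weaken => // a; rewrite !inE => ->; rewrite orbT.
Qed.

Lemma path_regular_stone_deriv : path_regular stone_deriv.
Proof.
apply: path_regular_resolve_cover; [exact: P_inj|exact: iota_uniq| |].
  by move=> k1 _; apply: path_regular_pred1_deriv.
by move=> k k1 _ _; apply/negP => /resvars_pred1_deriv; rewrite /= inE (negbTE n12).
Qed.

Lemma dsize_stone_deriv : dsize stone_deriv <= 9 * m ^ 2.
Proof.
have := dsize_resolve_cover (P i1) pred1_deriv ((m * 4).+3) (iota 1 m).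
rewrite size_iota => /(_ (fun k1 _ => dsize_pred1_deriv k1)) /leq_trans; apply.
by move: hj; nia.
Qed.

Lemma resolvable_notin_target u b :
  resolvable [:: i1; i2] (j :: js) u -> (u, b) \notin T.
Proof.
case: u => [a k|k] /=; rewrite ?mem_target_P ?mem_target_R.
  by case/andP; rewrite !inE => /orP[]/eqP-> _; rewrite ?(negbTE i1Ni) ?(negbTE i2Ni).
by rewrite inE negb_or => /andP[kNj kNjs]; case: b; rewrite ?kNj ?kNjs.
Qed.

Lemma resolvable_cases u : resolvable [:: i1; i2] (j :: js) u ->
  (exists k, [/\ u = R k, k != j & k \notin js]) \/
  (exists k, 1 <= k <= m /\ (u = P i1 k \/ u = P i2 k)).
Proof.
case: u => [a k|k] /=.
  by case/andP; rewrite !inE => /orP[]/eqP-> hk; right; exists k; split=> //; [left|right].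
by rewrite inE negb_or => /andP[kNj kNjs]; left; exists k.
Qed.

Lemma stone_deriv_correct :
  [/\ valid H stone_deriv, concl stone_deriv =i T, regular_of T stone_deriv,
      dsize stone_deriv <= 9 * m ^ 2
    & forall u, u \in resvars stone_deriv ->
        (exists k, [/\ u = R k, k != j & k \notin js]) \/
        (exists k, 1 <= k <= m /\ (u = P i1 k \/ u = P i2 k))].
Proof.
split; [exact: valid_stone_deriv|exact: concl_stone_deriv| |exact: dsize_stone_deriv|].
  split; first exact: path_regular_stone_deriv.
  by move=> u /resvars_stone_deriv uR b; apply: resolvable_notin_target.
by move=> u /resvars_stone_deriv; apply: resolvable_cases.
Qed.

End StoneDerivation.

Theorem theorem2p3 :
  exists c : nat,
  forall (N n : nat) (E : rel nat) (m i i1 i2 j : nat) (js : seq nat),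
    stone_dag N n E -> N <= m ->
    1 <= i <= N -> i <= n ->
    E i1 i -> E i2 i -> i1 != i2 ->
    1 <= j <= m ->
    (forall x, x \in js -> 1 <= x <= m) ->
    j \notin js ->
    exists d : deriv,
      [/\ valid (hyps N n E m i1 i2) d,
          concl d =i target i j js,
          regular_of (target i j js) d,
          dsize d <= c * m ^ 2
        & forall v, v \in resvars d ->
            (exists k, [/\ v = R k, k != j & k \notin js]) \/
            (exists k, 1 <= k <= m /\ (v = P i1 k \/ v = P i2 k))].
Proof.
exists 9 => N n E m i i1 i2 j js [edge _ _ _] Nm hi _ E1 E2 n12 hj hjs jNjs.
have [_ lt_i_i1 i1N] := edge _ _ E1; have [_ lt_i_i2 i2N] := edge _ _ E2.
exists (stone_deriv m i i1 i2 j js); apply: stone_deriv_correct => //; try lia.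
by have [->|jN1] := eqVneq j 1; [exists 2 | exists 1]; rewrite //; lia.
Qed.
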